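(* Let $t_*<t^*$ and $T=[t_*,t^*]$. Suppose $q$ is non-decreasing and $p$ is continuous and strictly increasing on some open interval containing $T$, and let $p^{-1}$ denote the inverse of $p$. Suppose that for some $j_0$ the sequence defined by $t_1=t_*$ and $t_{j+1}=p^{-1}(q(t_j))$, $j=1,\dots,j_0-1$, is well defined, strictly increasing, and satisfies $t_{j_0}>t^*>t_{j_0-1}$. Then $q(t)>p(t)$ for all $t\in T$. *)

(* concrete reals R, with Coquelicot's extended reals Rbar
   for the endpoints of a possibly unbounded open interval. *)
From Stdlib Require Import Reals.
From Coquelicot Require Import Coquelicot.
Open Scope R_scope.

Definition in_open_itv (a b : Rbar) (x : R) : Prop :=
  Rbar_lt a x /\ Rbar_lt x b.

(* Every x in T lies in a step [t_j, t_{j+1}) of the sequence, since t_1 = t_* and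
   t_{j0} > t^*.  On that step q(x) >= q(t_j) = p(t_{j+1}) > p(x). *)
From Stdlib Require Import Reals Lia Lra.
From Coquelicot Require Import Coquelicot.
Open Scope R_scope.

Lemma in_open_itv_between (a b : Rbar) (x y z : R) :
  in_open_itv a b x -> in_open_itv a b y -> x <= z <= y -> in_open_itv a b z.
Proof.
intros [Hax _] [_ Hyb] [Hxz Hzy]; split.
- apply Rbar_lt_le_trans with x; [exact Hax | exact Hxz].
- apply Rbar_le_lt_trans with y; [exact Hzy | exact Hyb].
Qed.

Lemma exists_step_bracketing (u : nat -> R) (m n : nat) (x : R) :
  (m <= n)%nat -> u m <= x -> x < u n ->
  exists j, (m <= j < n)%nat /\ u j <= x < u (S j).
Proof.
induction n as [|n IH]; intros Hmn Hm Hn.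
- replace m with 0%nat in Hm by lia; lra.
- destruct (Nat.eq_dec m (S n)) as [->|Hne]; [lra|].
  destruct (Rlt_le_dec x (u n)) as [Hxn|Hnx].
  + destruct (IH ltac:(lia) Hm Hxn) as [j [Hj Hbr]].
    exists j; split; [lia | exact Hbr].
  + exists n; split; [lia | lra].
Qed.

Lemma gt_on_step (a b : Rbar) (p q : R -> R) (u v x : R) :
  (forall x y, in_open_itv a b x -> in_open_itv a b y -> x <= y -> q x <= q y) ->
  (forall x y, in_open_itv a b x -> in_open_itv a b y -> x < y -> p x < p y) ->
  in_open_itv a b u -> in_open_itv a b v -> p v = q u ->
  u <= x < v -> q x > p x.
Proof.
intros Hq Hp Hu Hv Hpv [Hux Hxv].
assert (Hx : in_open_itv a b x) by (apply (in_open_itv_between a b u v); auto; lra).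
pose proof (Hq u x Hu Hx Hux).
pose proof (Hp x v Hx Hv Hxv).
lra.
Qed.

Theorem lemma2p1
  (tlo thi : R) (p q : R -> R) (a b : Rbar) (t : nat -> R) (j0 : nat) :
  tlo < thi ->
  (* (a, b) is an open interval containing T = [tlo, thi] *)
  Rbar_lt a tlo -> Rbar_lt thi b ->
  (* q non-decreasing on (a, b) *)
  (forall x y, in_open_itv a b x -> in_open_itv a b y -> x <= y -> q x <= q y) ->
  (* p continuous and strictly increasing on (a, b) *)
  (forall x, in_open_itv a b x -> continuity_pt p x) ->
  (forall x y, in_open_itv a b x -> in_open_itv a b y -> x < y -> p x < p y) ->
  (* the sequence t_1 = tlo, t_{j+1} = p^{-1}(q(t_j)), j = 1..j0-1,
     is well defined: t_{j+1} is the point of (a, b) mapped by p to q(t_j) *)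
  (2 <= j0)%nat ->
  t 1%nat = tlo ->
  (forall j, (1 <= j)%nat -> (j < j0)%nat ->
     in_open_itv a b (t (S j)) /\ p (t (S j)) = q (t j)) ->
  (* strictly increasing *)
  (forall i j, (1 <= i)%nat -> (i < j)%nat -> (j <= j0)%nat -> t i < t j) ->
  t j0 > thi -> thi > t (pred j0) ->
  forall x, tlo <= x <= thi -> q x > p x.
Proof.
intros Hlt Ha Hb Hq _ Hp Hj0 Ht1 Hstep _ Htj0 _ x Hx.
assert (Htlo : in_open_itv a b tlo).
{ split; [exact Ha | apply Rbar_lt_trans with thi; [exact Hlt | exact Hb]]. }
destruct (exists_step_bracketing t 1 j0 x) as [j [Hj Hbr]]; [lia | lra | lra |].
assert (Htj : in_open_itv a b (t j)).
{ destruct j as [|[|j']]; [lia | rewrite Ht1; exact Htlo | apply (Hstep (S j')); lia]. }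
destruct (Hstep j ltac:(lia) ltac:(lia)) as [HtSj Hpeq].
exact (gt_on_step a b p q (t j) (t (S j)) x Hq Hp Htj HtSj Hpeq Hbr).
Qed.
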